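(* Let $h(t)\in\mathbb{R}^l$ and $z(t)\in\mathbb{R}^p$ be processes such that $s(t)=\begin{bmatrix} z(t)\\ h(t)\end{bmatrix}$ is RC and, for every $t\in\mathbb{Z}$, all coordinates of $z(t)$ are orthogonal to $H^h_t$. Then for every $w\in\Sigma^+$ and every $t\in\mathbb{Z}$, all coordinates of $z^z_w(t)$ are orthogonal to $H^h_{t,w}$.
   Context: Setting (RC framework). All random variables on one probability space. $\Sigma$ finite alphabet, $\Sigma^*$ finite words ($\epsilon$ empty), $\Sigma^+=\Sigma^*\setminus\{\epsilon\}$, $|w|$ length. Fix $p_\sigma>0$; $p_\epsilon=1$, $p_{\sigma_1\cdots\sigma_k}=\prod_i p_{\sigma_i}$. Inputs: scalar processes $u_\sigma(t)$ with $\sum_\sigma\alpha_\sigma u_\sigma(t)=1$ for constants $\alpha_\sigma$, all first/second moments of $u_w(t)$ finite, where $u_w(t)=u_{\sigma_1}(t-k+1)u_{\sigma_2}(t-k+2)\cdots u_{\sigma_k}(t)$ for $w=\sigma_1\cdots\sigma_k$. $z^r_w(t)=r(t-|w|)u_w(t-1)/\sqrt{p_w}$. Admissible set $L\subseteq\Sigma^+$: $\Sigma\subseteq L$; $u_w=0$ a.s. for $w\notin L$; for some $S\subseteq\Sigma\times\Sigma$, a word of length $>1$ is in $L$ iff all its consecutive letter pairs are in $S$. A process $r$ is RC if: (1) $E[r(t)]=0$, $E[z^r_w(t)]=0$, $E[r(t)z^r_w(t)^T]$, $E[z^r_w(t)z^r_v(t)^T]$ finite and independent of $t$; $T^r_{w,v}:=E[z^r_w(t)z^r_v(t)^T]$,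 $\Lambda^r_w:=E[r(t)z^r_w(t)^T]$; (2) $T^r_{\sigma,\sigma'}=0$ for $\sigma\ne\sigma'$; $T^r_{w\sigma,v\sigma'}=0$ for $\sigma\neq\sigma'$ and $T^r_{w\sigma,v\sigma}=T^r_{w,v}$ if $w\sigma\in L$ or $v\sigma\in L$; $T^r_{w\sigma,\sigma'}=0$ for $\sigma\ne\sigma'$ and $T^r_{w\sigma,\sigma}=(\Lambda^r_w)^T$; (3) $T^r_{w,v}=0$ if $w\notin L$ or $v\notin L$; if $w\sigma\in L$ and $v\sigma\notin L$ then $T^r_{v,w}=T^r_{w,v}=0$. Hilbert space generated by random vectors = mean-square closure of span of their coordinates. $H^h_t$: generated by $\{z^h_v(t)\mid v\in\Sigma^+\}$; $H^h_{t,w}$: generated by $\{z^h_{vw}(t)\mid v\in\Sigma^+\}$. *)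

From HB Require Import structures.
From mathcomp Require Import all_boot all_order all_algebra.
From mathcomp Require Import all_classical all_reals all_analysis.
Set Implicit Arguments. Unset Strict Implicit. Unset Printing Implicit Defensive.
Import Order.TTheory GRing.Theory Num.Theory.
Local Open Scope ring_scope.
Local Open Scope classical_set_scope.

Section RCframework.
Context {R : realType} {d : measure_display} {Omega : measurableType d}.
Variable (P : probability Omega R).
Context {Sigma : finType}.
Variables (u : Sigma -> int -> Omega -> R) (pr : Sigma -> R).

Definition rv := Omega -> R.

Definition finite_mean (f : rv) := P.-integrable setT (fun x => (f x)%:E).
(* E[f] as a real number (meaningful when finite_mean f) *)
Definition Er (f : rv) : R := fine (\int[P]_x (f x)%:E)%E.

(* u_w(t) = u_{s1}(t-k+1) ... u_{sk}(t) for w = s1...sk *)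
Definition uw (w : seq Sigma) (t : int) : rv :=
  fun x => \prod_(i < size w)
             u (tnth (in_tuple w) i) (t - (size w)%:Z + 1 + (i : nat)%:Z) x.

Definition pw (w : seq Sigma) : R := \prod_(s <- w) pr s.

(* z^r_w(t) = r(t-|w|) u_w(t-1) / sqrt(p_w), coordinatewise;
   an R^n-valued process is given by its coordinates r t i, i : 'I_n *)
Definition zw {n : nat} (r : int -> 'I_n -> rv) (w : seq Sigma) (t : int)
  (i : 'I_n) : rv :=
  fun x => r (t - (size w)%:Z) i x * uw w (t - 1) x / Num.sqrt (pw w).

Definition input_ok (alpha : Sigma -> R) :=
  (forall t, {ae P, forall x, \sum_(s : Sigma) alpha s * u s t x = 1}) /\
  (forall w t, finite_mean (uw w t) /\
               finite_mean (fun x => uw w t x ^+ 2)).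

Definition admissible (L : pred (seq Sigma)) :=
  [/\ (forall w, L w -> w != [::]),
      (forall s, L [:: s]),
      (forall w t, w != [::] -> ~~ L w -> {ae P, forall x, uw w t x = 0}) &
      exists S : rel Sigma, forall w, (1 < size w)%N -> L w = sorted S w].

(* T^r_{w,v} and Lambda^r_w (taken at t = 0; RC requires t-independence) *)
Definition Tmx {n} (r : int -> 'I_n -> rv) (w v : seq Sigma) (i j : 'I_n) : R :=
  Er (fun x => zw r w 0 i x * zw r v 0 j x).
Definition Lmx {n} (r : int -> 'I_n -> rv) (w : seq Sigma) (i j : 'I_n) : R :=
  Er (fun x => r 0 i x * zw r w 0 j x).

Definition RC1 {n} (r : int -> 'I_n -> rv) :=
  [/\ (forall t i, finite_mean (r t i) /\ Er (r t i) = 0),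
   (forall w t i, w != [::] -> finite_mean (zw r w t i) /\ Er (zw r w t i) = 0),
   (forall w t i j, w != [::] ->
      finite_mean (fun x => r t i x * zw r w t j x) /\
      Er (fun x => r t i x * zw r w t j x) = Lmx r w i j) &
   (forall w v t i j, w != [::] -> v != [::] ->
      finite_mean (fun x => zw r w t i x * zw r v t j x) /\
      Er (fun x => zw r w t i x * zw r v t j x) = Tmx r w v i j)].

Definition RC2 (L : pred (seq Sigma)) {n} (r : int -> 'I_n -> rv) :=
   [/\ (forall s s' i j, s != s' -> Tmx r [:: s] [:: s'] i j = 0),
       (forall w v s s' i j, w != [::] -> v != [::] -> s != s' ->
          Tmx r (rcons w s) (rcons v s') i j = 0),
       (forall w v s i j, w != [::] -> v != [::] ->
          L (rcons w s) || L (rcons v s) ->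
          Tmx r (rcons w s) (rcons v s) i j = Tmx r w v i j),
       (forall w s s' i j, w != [::] -> s != s' ->
          Tmx r (rcons w s) [:: s'] i j = 0) &
       (forall w s i j, w != [::] -> Tmx r (rcons w s) [:: s] i j = Lmx r w j i)].

Definition RC3 (L : pred (seq Sigma)) {n} (r : int -> 'I_n -> rv) :=
   (forall w v i j, w != [::] -> v != [::] -> ~~ L w || ~~ L v ->
      Tmx r w v i j = 0) /\
   (forall w v s i j, w != [::] -> v != [::] -> L (rcons w s) ->
      ~~ L (rcons v s) -> Tmx r v w j i = 0 /\ Tmx r w v i j = 0).

Definition RC (L : pred (seq Sigma)) {n} (r : int -> 'I_n -> rv) :=
  [/\ RC1 r, RC2 L r & RC3 L r].

(* Hilbert space generated by a family G of scalar random variables: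
   mean-square closure of the linear span *)
Definition span_of (G : set rv) (Y : rv) :=
  exists (m : nat) (c : 'I_m -> R) (g : 'I_m -> rv),
    (forall k, G (g k)) /\ Y = (fun x => \sum_(k < m) c k * g k x).

Definition hilbert_gen (G : set rv) : set rv := fun X =>
  measurable_fun setT X /\
  forall eps : R, 0 < eps -> exists Y, span_of G Y /\
    finite_mean (fun x => (X x - Y x) ^+ 2) /\ Er (fun x => (X x - Y x) ^+ 2) < eps.

Definition orth (X : rv) (H : set rv) :=
  forall Y, H Y -> finite_mean (fun x => X x * Y x) /\ Er (fun x => X x * Y x) = 0.

Definition H_t {l} (h : int -> 'I_l -> rv) (t : int) : set rv :=
  hilbert_gen (fun X => exists v i, v != [::] /\ X = zw h v t i).
Definition H_tw {l} (h : int -> 'I_l -> rv) (t : int) (w : seq Sigma) : set rv :=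
  hilbert_gen (fun X => exists v i, v != [::] /\ X = zw h (v ++ w) t i).

End RCframework.

Definition stack {R : realType} {Omega : Type} {p l : nat}
  (z : int -> 'I_p -> Omega -> R) (h : int -> 'I_l -> Omega -> R)
  : int -> 'I_(p + l)%N -> Omega -> R :=
  fun t (i : 'I_(p + l)%N) => match fintype.split i with inl j => z t j | inr j => h t j end.

From HB Require Import structures.
From mathcomp Require Import all_boot all_order all_algebra.
From mathcomp Require Import all_classical all_reals all_analysis.
From mathcomp Require Import measurable_realfun ring.
Import Order.TTheory GRing.Theory Num.Theory.
Local Open Scope ring_scope.

(* Peeling the last letter off [w] with the RC identities
   [T_{ws,(vw')s} = T_{w',vw'}] (or [0] when an extension leaves [L]) reduces the
   covariance of [z^z_w(t)] with a generator [z^h_{vw}(t)] of [H^h_{t,w}] to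
   [T_{s,vs} = Lambda_v = E[z(0) z^h_v(0)]], which vanishes since [z(0)] is
   orthogonal to [H^h_0].  Orthogonality to the generators passes to their span
   and, through [2|ab| <= e a^2 + b^2 / e], to its mean-square closure. *)

Lemma normrM_le_mean {R : realFieldType} (a b e : R) : 0 < e ->
  `|a * b| <= (e * a ^+ 2 + e^-1 * b ^+ 2) / 2.
Proof.
move=> e_gt0; rewrite normrM -(real_normK (num_real a)) -(real_normK (num_real b)).
have := sqr_ge0 (e * `|a| - `|b|); have := normr_ge0 a; have := normr_ge0 b.
set A := `|a|; set B := `|b| => B0 A0 sq0.
have -> : (e * A ^+ 2 + e^-1 * B ^+ 2) / 2 = A * B + (e * A - B) ^+ 2 / (e * 2).
  by field; rewrite gt_eqF.
by rewrite lerDl divr_ge0 // mulr_ge0 // ltW.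
Qed.

Section SquareIntegrable.
Context {R : realType} {d : measure_display} {Omega : measurableType d}.
Variable P : probability Omega R.
Implicit Types (f g : Omega -> R) (G : set (Omega -> R)).

Lemma finite_mean_measurable {f} : finite_mean P f -> measurable_fun setT f.
Proof. by move=> /(measurable_int P) /measurable_EFinP. Qed.

Lemma finite_mean_le {f g} : measurable_fun setT f -> finite_mean P g ->
  (forall x, `|f x| <= `|g x|) -> finite_mean P f.
Proof.
move=> mf ig fg; apply: (le_integrable measurableT _ _ ig) => //.
  exact/measurable_EFinP.
by move=> x _; rewrite /= lee_fin.
Qed.

Lemma finite_meanD {f g} : finite_mean P f -> finite_mean P g ->
  finite_mean P (fun x => f x + g x).
Proof.
move=> ff fg; have := integrableD measurableT ff fg.
by apply: eq_integrable => // x _; rewrite /= EFinD.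
Qed.

Lemma finite_meanZ (c : R) {f} : finite_mean P f -> finite_mean P (fun x => c * f x).
Proof.
move=> ff; have := integrableZl measurableT c ff.
by apply: eq_integrable => // x _; rewrite /= EFinM.
Qed.

Lemma finite_meanB {f g} : finite_mean P f -> finite_mean P g ->
  finite_mean P (fun x => f x - g x).
Proof.
move=> ff fg; have := finite_meanD ff (finite_meanZ (-1) fg).
by apply: eq_integrable => // x _; rewrite mulN1r.
Qed.

Lemma ErD {f g} : finite_mean P f -> finite_mean P g ->
  Er P (fun x => f x + g x) = Er P f + Er P g.
Proof. exact: (RintegralD measurableT). Qed.

Lemma ErZ (c : R) {f} : finite_mean P f -> Er P (fun x => c * f x) = c * Er P f.
Proof. exact: RintegralZl. Qed.

Lemma finite_mean_sum {m} (c : 'I_m -> R) (g : 'I_m -> Omega -> R) :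
  (forall k, finite_mean P (g k)) ->
  finite_mean P (fun x => \sum_(k < m) c k * g k x) /\
  Er P (fun x => \sum_(k < m) c k * g k x) = \sum_(k < m) c k * Er P (g k).
Proof.
elim: m c g => [|m IH] c g fg.
  under eq_fun do rewrite big_ord0.
  by rewrite big_ord0 /Er integral0; split; first exact: integrable0.
have [IHf IHE] := IH (fun k => c (lift ord0 k)) (fun k => g (lift ord0 k)) (fun k => fg _).
under eq_fun do rewrite big_ord_recl.
rewrite big_ord_recl; split; first exact: finite_meanD (finite_meanZ _ (fg _)) IHf.
by rewrite ErD ?ErZ ?IHE //; exact: finite_meanZ.
Qed.

Lemma Er_mul_le {e : R} {f g} : 0 < e -> measurable_fun setT (fun x => f x * g x) ->
  finite_mean P (fun x => f x ^+ 2) -> finite_mean P (fun x => g x ^+ 2) ->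
  finite_mean P (fun x => f x * g x) /\
  `|Er P (fun x => f x * g x)| <=
    (e * Er P (fun x => f x ^+ 2) + e^-1 * Er P (fun x => g x ^+ 2)) / 2.
Proof.
move=> e_gt0 mfg f2 g2.
have fbound : finite_mean P (fun x => (e * f x ^+ 2 + e^-1 * g x ^+ 2) / 2).
  under eq_fun do rewrite mulrC.
  by apply/finite_meanZ/finite_meanD; apply: finite_meanZ.
have bound x : `|f x * g x| <= (e * f x ^+ 2 + e^-1 * g x ^+ 2) / 2.
  exact: normrM_le_mean.
have fg : finite_mean P (fun x => f x * g x).
  apply: finite_mean_le mfg fbound _ => x.
  by apply: (le_trans (bound x)); exact: ler_norm.
have Ebound : Er P (fun x => (e * f x ^+ 2 + e^-1 * g x ^+ 2) / 2) =
    (e * Er P (fun x => f x ^+ 2) + e^-1 * Er P (fun x => g x ^+ 2)) / 2.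
  under eq_fun do rewrite mulrC.
  rewrite ErZ ?ErD ?ErZ 1?mulrC //; last (apply: finite_meanD); exact: finite_meanZ.
split => //; rewrite -Ebound.
apply: le_trans (le_normr_Rintegral measurableT fg) _.
apply: (le_Rintegral measurableT _ fbound) => [|x _]; last exact: bound.
apply: (finite_mean_le (measurableT_comp (@normr_measurable _ _) mfg) fg) => x.
by rewrite normr_id.
Qed.

Lemma hilbert_gen_mem G g : G g -> measurable_fun setT g -> hilbert_gen P G g.
Proof.
move=> Gg mg; split => // eps eps_gt0; exists g; split.
  exists 1%N, (fun=> 1), (fun=> g); split => //.
  by apply: boolp.funext => x; rewrite big_ord1 mul1r.
under eq_fun do rewrite subrr expr0n.
by rewrite /Er integral0; split; first exact: integrable0.
Qed.

Section OrthogonalToGenerators.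
Variables (X : Omega -> R) (G : set (Omega -> R)).
Hypothesis orthX_gen : forall g, G g ->
  finite_mean P (fun x => X x * g x) /\ Er P (fun x => X x * g x) = 0.

Lemma orth_span {Y} : span_of G Y ->
  finite_mean P (fun x => X x * Y x) /\ Er P (fun x => X x * Y x) = 0.
Proof.
move=> [m [c [g [Gg ->]]]].
under eq_fun do rewrite mulr_sumr; under eq_fun do under eq_bigr do rewrite mulrCA.
have [fsum Esum] := finite_mean_sum c (fun k x => X x * g k x)
  (fun k => (orthX_gen _ (Gg k)).1).
split => //; rewrite Esum big1 // => k _.
by rewrite (orthX_gen _ (Gg k)).2 mulr0.
Qed.

Lemma orth_hilbert_gen : measurable_fun setT X ->
  finite_mean P (fun x => X x ^+ 2) -> orth P X (hilbert_gen P G).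
Proof.
move=> mX X2 Y [mY approx].
have split_near e Y' : 0 < e -> span_of G Y' ->
    finite_mean P (fun x => (Y x - Y' x) ^+ 2) ->
    finite_mean P (fun x => X x * Y x) /\
    `|Er P (fun x => X x * Y x)| <=
      (e * Er P (fun x => X x ^+ 2) + e^-1 * Er P (fun x => (Y x - Y' x) ^+ 2)) / 2.
  move=> e_gt0 spanY' D2.
  have [XY' EXY'] := orth_span spanY'.
  have mXD : measurable_fun setT (fun x => X x * (Y x - Y' x)).
    have := measurable_funB (measurable_funM mX mY) (finite_mean_measurable XY').
    by apply: eq_measurable_fun => x _; rewrite mulrBr.
  have [XD EXD] := Er_mul_le e_gt0 mXD X2 D2.
  have XYE : (fun x => X x * Y x) = (fun x => X x * Y' x + X x * (Y x - Y' x)).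
    by apply: boolp.funext => x; ring.
  by rewrite XYE ErD // EXY' add0r; split => //; exact: finite_meanD.
have [Y1 [spanY1 [D1 _]]] := approx 1 ltr01.
split; first exact: (split_near 1 Y1 ltr01 spanY1 D1).1.
apply/normr0_eq0/eqP; rewrite eq_le normr_ge0 andbT.
apply/ler_addgt0Pr => eta eta_gt0; rewrite add0r.
set a := Er P (fun x => X x ^+ 2).
(* [e = eta / (a + 1)] and an approximation error below [e * eta] bound both
   halves of the mean inequality by [eta]. *)
have a_ge0 : 0 <= a by apply: Rintegral_ge0 => // x _; exact: sqr_ge0.
have e_gt0 : 0 < eta / (a + 1) by rewrite divr_gt0 // ltr_wpDl.
have [Y' [spanY' [D2 D2_lt]]] := approx (eta / (a + 1) * eta) (mulr_gt0 e_gt0 eta_gt0).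
apply: le_trans (split_near _ _ e_gt0 spanY' D2).2 _.
rewrite ler_pdivrMr // mulr2n mulrDr mulr1 lerD //.
  rewrite mulrAC ler_pdivrMr ?ltr_wpDl // mulrDr mulr1 lerDl; exact: ltW.
by rewrite -(ler_pM2l e_gt0) mulrA divrr ?unitf_gt0 // mul1r ltW.
Qed.

End OrthogonalToGenerators.

End SquareIntegrable.

Section RCCovariances.
Context {R : realType} {d : measure_display} {Omega : measurableType d}.
Variables (P : probability Omega R) (Sigma : finType).
Variables (u : Sigma -> int -> Omega -> R) (pr : Sigma -> R).

Lemma Tmx_sym n (r : int -> 'I_n -> Omega -> R) w v i j :
  Tmx P u pr r w v i j = Tmx P u pr r v w j i.
Proof. by rewrite /Tmx; under eq_fun do rewrite mulrC. Qed.

Lemma Tmx_cat_eq0 (L : pred (seq Sigma)) n (r : int -> 'I_n -> Omega -> R)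
    v i j : RC2 P u pr L r -> RC3 P u pr L r -> v != [::] ->
  Lmx P u pr r v i j = 0 ->
  forall w, w != [::] -> Tmx P u pr r w (v ++ w) i j = 0.
Proof.
move=> [_ _ Tmx_rcons _ Tmx_rcons_letter] [Tmx_notL _] vne Lvij.
elim/last_ind => [//|w s IHw] _.
have [->|wne] := eqVneq w [::].
  by rewrite Tmx_sym cats1 Tmx_rcons_letter.
have vwne : v ++ w != [::] by case: (v) vne.
rewrite -rcons_cat.
have [inL|] := boolP (L (rcons w s) || L (rcons (v ++ w) s)).
  by rewrite Tmx_rcons // IHw.
by rewrite negb_or => /andP[wsL _]; apply: Tmx_notL; rewrite ?wsL // -size_eq0 size_rcons.
Qed.

End RCCovariances.

Section StackedProcess.
Context {R : realType} {d : measure_display} {Omega : measurableType d}.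
Context {Sigma : finType} (u : Sigma -> int -> Omega -> R) (pr : Sigma -> R).
Context {p l : nat} (z : int -> 'I_p -> Omega -> R) (h : int -> 'I_l -> Omega -> R).

Lemma stack_l t i : stack z h t (lshift l i) = z t i.
Proof. by rewrite /stack (@unsplitK p l (inl i)). Qed.

Lemma zw_stack_l w t i : zw u pr (stack z h) w t (lshift l i) = zw u pr z w t i.
Proof. by rewrite /zw stack_l. Qed.

Lemma zw_stack_r w t j : zw u pr (stack z h) w t (rshift p j) = zw u pr h w t j.
Proof. by rewrite /zw /stack (@unsplitK p l (inr j)). Qed.

End StackedProcess.

Theorem mainTheorem5 (R : realType) (d : measure_display) (Omega : measurableType d)
  (P : probability Omega R) (Sigma : finType)
  (u : Sigma -> int -> Omega -> R) (pr : Sigma -> R) (alpha : Sigma -> R)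
  (L : pred (seq Sigma)) (p l : nat)
  (z : int -> 'I_p -> Omega -> R) (h : int -> 'I_l -> Omega -> R) :
  (forall s, 0 < pr s) ->
  input_ok P u alpha ->
  admissible P u L ->
  RC P u pr L (stack z h) ->
  (forall (t : int) (i : 'I_p), orth P (z t i) (H_t P u pr h t)) ->
  forall (w : seq Sigma) (t : int) (i : 'I_p), w != [::] ->
    orth P (zw u pr z w t i) (H_tw P u pr h t w).
Proof.
move=> _ _ _ [[_ mean_zw _ mean_zwzw] RC2s RC3s] orth_z w t i wne.
have zw_in_H v j t' : v != [::] -> H_t P u pr h t' (zw u pr h v t' j).
  move=> vne; apply: hilbert_gen_mem; first by exists v, j.
  by have := (mean_zw v t' (rshift p j) vne).1; rewrite zw_stack_r; apply: finite_mean_measurable.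
have Lmx_zh v j : v != [::] -> Lmx P u pr (stack z h) v (lshift l i) (rshift p j) = 0.
  by move=> vne; rewrite /Lmx stack_l zw_stack_r; exact: (orth_z 0 i _ (zw_in_H v j 0 vne)).2.
apply: orth_hilbert_gen.
- move=> _ [v [j [vne ->]]].
  have vwne : v ++ w != [::] by case: (v) vne.
  have [mean_prod cov] := mean_zwzw w (v ++ w) t (lshift l i) (rshift p j) wne vwne.
  rewrite zw_stack_l zw_stack_r in mean_prod cov; split; rewrite ?cov //.
  exact: Tmx_cat_eq0 RC2s RC3s vne (Lmx_zh v j vne) w wne.
- by have := (mean_zw w t (lshift l i) wne).1; rewrite zw_stack_l; apply: finite_mean_measurable.
- have := (mean_zwzw w w t (lshift l i) (lshift l i) wne wne).1; rewrite zw_stack_l.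
  by apply: eq_integrable => // x _; rewrite /= expr2.
Qed.
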